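(* Let $G$ be an abelian Lie group whose identity component $G^0$ has finite index in $G$. If $S$ is a finitely generated subsemigroup of $G$ which is somewhere dense in $G$ (i.e. $\overline{S}$ contains a non-empty open subset of $G$), then $S\cap G^0$ contains a finitely generated subsemigroup of $G^0$ which is somewhere dense in $G^0$. *)

From HB Require Import structures.
From mathcomp Require Import all_boot all_order all_algebra.
From mathcomp Require Import all_classical all_reals all_analysis.
From mathcomp Require Import Rstruct Rstruct_topology.
From Stdlib Require Rdefinitions.

Set Implicit Arguments.
Unset Strict Implicit.
Unset Printing Implicit Defensive.

Import Order.TTheory GRing.Theory Num.Theory.
Local Open Scope classical_set_scope.
Local Open Scope ring_scope.

Definition locally_euclidean (G : topologicalType) (n : nat) : Prop :=
  forall x : G, exists (U : set G) (f : G -> 'rV[Rdefinitions.R]_n)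
                       (g : 'rV[Rdefinitions.R]_n -> G),
    [/\ open U, U x, open (f @` U),
        {within U, continuous f} /\ {within f @` U, continuous g} &
        (forall y, U y -> g (f y) = y)].

(* An abelian Lie group, topologically: a Hausdorff abelian topological group
   which is a topological manifold (Gleason--Montgomery--Zippin: such a group
   carries a unique compatible real-analytic Lie group structure). *)
Definition abelian_Lie_group (G : topologicalZmodType) : Prop :=
  hausdorff_space G /\ exists n : nat, locally_euclidean G n.

Definition identity_component (G : topologicalZmodType) : set G :=
  connected_component setT 0.
Arguments identity_component G : clear implicits.

Definition finite_index (G : zmodType) (H : set G) : Prop :=
  exists s : seq G, forall x : G, exists2 g, g \in s & H (x - g).

Definition subsemigroup_gen (G : zmodType) (A : set G) : set G :=
  \bigcap_(B in [set B : set G | A `<=` B /\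
                   (forall x y, B x -> B y -> B (x + y))]) B.

Definition fg_subsemigroup (G : zmodType) (S : set G) : Prop :=
  exists s : seq G, S = subsemigroup_gen [set x | x \in s].

(* S is somewhere dense in the subspace H of G: the closure of S in H
   (= closure S `&` H) contains a non-empty relatively open subset of H. *)
Definition somewhere_dense_in (G : topologicalType) (H S : set G) : Prop :=
  exists V : set G, [/\ open V, (V `&` H) !=set0 & V `&` H `<=` closure S `&` H].

(* Choose K > 0 with b *+ K in G^0 for every generator b of S (finite index and the
   pigeonhole principle), and let T be the semigroup generated by these multiples; it lies in
   S and in G^0. Writing an element of S as a nat combination of the generators and reducing
   the coefficients mod K covers S by finitely many translates of T. So the closure of S is
   covered by finitely many translates of the closed set closure T; as one member of a finite
   closed cover of a set with nonempty interior has nonempty interior, so does closure T,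
   which lies in the closed subgroup G^0. *)

From HB Require Import structures.
From mathcomp Require Import all_boot all_order all_algebra.
From mathcomp Require Import all_classical all_reals all_analysis.

Set Implicit Arguments.
Unset Strict Implicit.
Unset Printing Implicit Defensive.
Import Order.TTheory GRing.Theory Num.Theory.
Local Open Scope classical_set_scope.
Local Open Scope ring_scope.

Section Topology.
Variable T : topologicalType.
Implicit Types A B : set T.

Lemma closure_subset_closed A B : closed B -> A `<=` B -> closure A `<=` B.
Proof. by move=> clB AB; rewrite closureE; exact: smallest_sub. Qed.

Lemma interior_setU_closed A B : closed B ->
  (A `|` B)° !=set0 -> A° !=set0 \/ B° !=set0.
Proof.
move=> clB [x ABx].
set W := (A `|` B)°; have oW : open W := open_interior (A `|` B).
have [[y [Wy nBy]]|W_B] := pselect ((W `&` ~` B) !=set0); [left|right].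
  have oWB : open (W `&` ~` B) by apply: openI => //; exact: closed_openC.
  have WB_A : W `&` ~` B `<=` A by move=> z [/interior_subset[//|Bz] /(_ Bz)].
  by exists y; apply: (interiorS WB_A); rewrite (interior_id _).1.
have WB : W `<=` B by move=> z Wz; apply: contrapT => nBz; apply: W_B; exists z.
by exists x; apply: (interiorS WB); rewrite (interior_id _).1.
Qed.

Lemma interior_bigsetU_closed (I : eqType) (s : seq I) (F : I -> set T) :
  (forall i, i \in s -> closed (F i)) ->
  (\big[setU/set0]_(i <- s) F i)° !=set0 -> exists2 i, i \in s & (F i)° !=set0.
Proof.
elim: s => [|j s IHs] clF; first by rewrite big_nil interior0 => -[].
rewrite big_cons setUC => /interior_setU_closed[||Fj0].
- by apply: clF; exact: mem_head.
- case/IHs=> [i s_i|i s_i Fi0]; first by apply: clF; rewrite inE s_i orbT.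
  by exists i; rewrite // inE s_i orbT.
- by exists j => //; exact: mem_head.
Qed.

Lemma somewhere_dense_setT_interior A : somewhere_dense_in setT A -> (closure A)° !=set0.
Proof.
move=> [V [oV [v [Vv _]] VA]].
have VclA : V `<=` closure A by move=> x Vx; case: (VA x).
by exists v; apply: (interiorS VclA); rewrite (interior_id _).1.
Qed.

Lemma somewhere_dense_in_interior A B : closure A `<=` B -> (closure A)° !=set0 ->
  somewhere_dense_in B A.
Proof.
move=> AB [x Ax]; exists (closure A)°; split; first exact: open_interior.
  by exists x; split => //; apply: AB; exact: interior_subset.
by move=> y [/interior_subset Ay By].
Qed.

End Topology.

Section FiniteIndex.
Variables (V : zmodType) (H : set V).
Hypotheses (H0 : H 0) (HB : forall x y, H x -> H y -> H (x - y)).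

Lemma subgroupD x y : H x -> H y -> H (x + y).
Proof.
move=> Hx Hy; have -> : x + y = x - (0 - y) by rewrite sub0r opprK.
by apply: HB => //; apply: HB.
Qed.

Lemma subgroup_mulrn x n : H x -> H (x *+ n).
Proof.
move=> Hx; elim: n => [|n IHn]; first by rewrite mulr0n.
by rewrite mulrS; apply: subgroupD.
Qed.

Lemma finite_index_mulrn a : finite_index H -> exists2 k, (0 < k)%N & H (a *+ k).
Proof.
move=> [cs hcs].
have /choice[r Hr] : forall i : 'I_(size cs).+1, exists j : 'I_(size cs), H (a *+ i - cs`_j).
  move=> i; have [c cs_c Hc] := hcs (a *+ i).
  have c_lt : (index c cs < size cs)%N by rewrite index_mem.
  by exists (Ordinal c_lt); rewrite /= nth_index.
have [/injectiveP r_inj|/injectivePn[i [j neq_ij eq_rij]]] := boolP (injectiveb r).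
  by have := leq_card r r_inj; rewrite !card_ord ltnn.
wlog lt_ij : i j neq_ij eq_rij / (i < j)%N.
  move=> W; case: (ltngtP i j) => [|lt_ji|/val_inj eq_ij]; first exact: W.
  - by apply: (W j i); rewrite 1?eq_sym.
  - by rewrite eq_ij eqxx in neq_ij.
exists (j - i)%N; first by rewrite subn_gt0.
have := HB (Hr j) (Hr i).
by rewrite -eq_rij opprB addrA subrK -mulrnBr // ltnW.
Qed.

Lemma finite_index_uniform_mulrn (s : seq V) : finite_index H ->
  exists2 K, (0 < K)%N & forall a, a \in s -> H (a *+ K).
Proof.
move=> fiH; elim: s => [|b s [K K_gt0 HK]]; first by exists 1%N.
have [k k_gt0 Hbk] := finite_index_mulrn b fiH.
exists (k * K)%N => [|a]; first by rewrite muln_gt0 k_gt0.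
rewrite inE => /predU1P[->|s_a]; first by rewrite mulrnA; apply: subgroup_mulrn.
by rewrite mulnC mulrnA; apply/subgroup_mulrn/HK.
Qed.

End FiniteIndex.

Section TopologicalZmodule.
Variable G : topologicalZmodType.
Implicit Types (a x y : G) (A : set G).

Lemma continuous_subr a : continuous (fun x => x - a).
Proof.
move=> x; apply: (@continuous_comp _ _ _ (fun x => (x, a)) (fun z : G * G => z.1 - z.2)).
  by apply: cvg_pair; [exact: cvg_id|exact: cvg_cst].
exact: sub_continuous.
Qed.

Lemma continuous_rsubr a : continuous (fun x => a - x).
Proof.
move=> x; apply: (@continuous_comp _ _ _ (fun x => (a, x)) (fun z : G * G => z.1 - z.2)).
  by apply: cvg_pair; [exact: cvg_cst|exact: cvg_id].
exact: sub_continuous.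
Qed.

Lemma closed_translate a A : closed A -> closed [set x | A (x - a)].
Proof. by apply: preimage_closed => x _; exact: continuous_subr. Qed.

Lemma interior_translate a A x : [set y | A (y - a)]° x -> A° (x - a).
Proof.
move=> Ax; have := @continuous_subr (- a) (x - a).
rewrite /continuous_at opprK subrK => /(_ _ Ax).
by rewrite /interior nbhs_filterE /=; apply: filterS => y /=; rewrite addrK.
Qed.

Lemma interior_closure_finite_translates (I : finType) (f : I -> G) A B :
  A `<=` [set x | exists i, B (x - f i)] -> (closure A)° !=set0 -> (closure B)° !=set0.
Proof.
move=> AB intA.
have clB i : closed [set x | closure B (x - f i)].
  by apply: closed_translate; exact: closed_closure.
have cover : closure A `<=` \big[setU/set0]_i [set x | closure B (x - f i)].
  apply: closure_subset_closed => [|x /AB[i Bx]]; first by apply: closed_bigsetU.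
  by rewrite (bigD1 i) //; left; exact: subset_closure.
have [i _ [x /interior_translate clBx]] := interior_bigsetU_closed (fun i _ => clB i)
  (subset_nonempty (interiorS cover) intA).
by exists (x - f i).
Qed.

Local Notation G0 := (identity_component G).

Lemma identity_component0 : G0 0.
Proof. exact: connected_component_refl. Qed.

Lemma identity_componentB x y : G0 x -> G0 y -> G0 (x - y).
Proof.
move=> G0x G0y; suff : (fun z => x - z) @` G0 `<=` G0 by apply; exists y.
apply: connected_component_max => //.
- by exists x; rewrite // subrr.
- apply: connected_continuous_connected; first exact: component_connected.
  by move=> z; apply: continuous_subspaceT; exact: continuous_rsubr.
Qed.

Lemma identity_componentD x y : G0 x -> G0 y -> G0 (x + y).
Proof. exact: (@subgroupD _ G0 identity_component0 identity_componentB). Qed.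

Lemma closed_identity_component : closed G0.
Proof. exact: component_closed closedT. Qed.

End TopologicalZmodule.

Section SubsemigroupGen.
Variable V : zmodType.
Implicit Types (A B : set V) (x y : V).

Lemma subsemigroup_gen_sub A B : A `<=` B ->
  (forall x y, B x -> B y -> B (x + y)) -> subsemigroup_gen A `<=` B.
Proof. by move=> AB DB x; apply; split. Qed.

Lemma sub_subsemigroup_gen A : A `<=` subsemigroup_gen A.
Proof. by move=> x Ax B [/(_ x Ax)]. Qed.

Lemma subsemigroup_genD A x y : subsemigroup_gen A x -> subsemigroup_gen A y ->
  subsemigroup_gen A (x + y).
Proof. by move=> Ax Ay B PB; case: (PB) => _ DB; apply: DB; [exact: Ax|exact: Ay]. Qed.

Lemma subsemigroup_gen_mulrn A x n : (0 < n)%N -> subsemigroup_gen A x ->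
  subsemigroup_gen A (x *+ n).
Proof.
case: n => [|n] // _ Ax; elim: n => [|n IHn]; first by rewrite mulr1n.
by rewrite mulrS; apply: subsemigroup_genD.
Qed.

Lemma subsemigroup_genD_sum A x (I : finType) (b : I -> V) (q : I -> nat) :
  subsemigroup_gen A x -> (forall i, A (b i)) ->
  subsemigroup_gen A (x + \sum_i b i *+ q i).
Proof.
move=> Ax Ab; elim/big_rec: _ => [|i y _ IHy]; first by rewrite addr0.
rewrite addrCA addrC; case: (posnP (q i)) => [->|q_gt0]; first by rewrite mulr0n addr0.
apply: subsemigroup_genD => //; apply: subsemigroup_gen_mulrn q_gt0 _.
exact: sub_subsemigroup_gen.
Qed.

Lemma subsemigroup_gen_seq_sum (s : seq V) :
  subsemigroup_gen [set` s] `<=`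
  [set x | exists n : 'I_(size s) -> nat, x = \sum_(i < size s) s`_i *+ n i].
Proof.
apply: subsemigroup_gen_sub => [y s_y|_ _ [m ->] [n ->]].
  have y_lt : (index y s < size s)%N by rewrite index_mem.
  exists (fun i : 'I__ => (i == Ordinal y_lt) : nat).
  rewrite (bigD1 (Ordinal y_lt)) //= eqxx nth_index // big1 ?addr0 // => i /negbTE ->.
  by rewrite mulr0n.
by exists (fun i => m i + n i)%N; rewrite -big_split; apply: eq_bigr => i _; rewrite mulrnDr.
Qed.

Lemma subsemigroup_gen_nil : subsemigroup_gen [set` [::]] = set0 :> set V.
Proof. by rewrite set_nil; apply/seteqP; split => // x; apply: subsemigroup_gen_sub. Qed.

Lemma subsemigroup_gen_map_mulrn (s : seq V) K : (0 < K)%N ->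
  subsemigroup_gen [set` [seq b *+ K | b <- s]] `<=` subsemigroup_gen [set` s].
Proof.
move=> K_gt0; apply: subsemigroup_gen_sub => [_ /mapP[b s_b ->]|].
  by apply: subsemigroup_gen_mulrn K_gt0 _; exact: sub_subsemigroup_gen.
exact: subsemigroup_genD.
Qed.

(* The quotient part [\sum_i (s`_i *+ K) *+ (n i %/ K)] may be 0; shifting it by [a *+ K]
   puts it in the semigroup generated by the [b *+ K]. *)
Lemma subsemigroup_gen_residues (s : seq V) a K : a \in s -> (0 < K)%N ->
  subsemigroup_gen [set` s] `<=`
  [set x | exists r : {ffun 'I_(size s) -> 'I_K},
     subsemigroup_gen [set` [seq b *+ K | b <- s]]
       (x - (\sum_(i < size s) s`_i *+ r i - a *+ K))].
Proof.
move=> s_a K_gt0 _ /subsemigroup_gen_seq_sum[n ->].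
exists [ffun i => Ordinal (ltn_pmod (n i) K_gt0)].
have -> : \sum_(i < size s) s`_i *+ n i =
          \sum_(i < size s) s`_i *+ (n i %% K) + \sum_(i < size s) (s`_i *+ K) *+ (n i %/ K).
  rewrite -big_split; apply: eq_bigr => i _.
  by rewrite /= -mulrnA -mulrnDr addnC mulnC -divn_eq.
rewrite [X in _ - (X - _)](eq_bigr (fun i : 'I__ => s`_i *+ (n i %% K))) => [|i _];
  last by rewrite ffunE.
rewrite opprB addrC addrA subrK.
apply: subsemigroup_genD_sum => [|i]; last by apply: map_f; exact: mem_nth.
by apply: sub_subsemigroup_gen; exact: map_f.
Qed.

End SubsemigroupGen.

Theorem lemma2p5 (G : topologicalZmodType) (S : set G) :
  abelian_Lie_group G ->
  finite_index (identity_component G) ->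
  fg_subsemigroup S ->
  somewhere_dense_in setT S ->
  exists T : set G,
    [/\ T `<=` S `&` identity_component G,
        fg_subsemigroup T &
        somewhere_dense_in (identity_component G) T].
Proof.
move=> _ fiG0 [s ->] /somewhere_dense_setT_interior intS.
have [a s_a] : exists a, a \in s.
  case: s intS => [|a s] intS; last by exists a; exact: mem_head.
  by move: intS; rewrite subsemigroup_gen_nil closure0 interior0 => -[].
have [K K_gt0 G0K] := finite_index_uniform_mulrn (@identity_component0 G)
  (@identity_componentB G) s fiG0.
set T := subsemigroup_gen [set` [seq b *+ K | b <- s]].
have TG0 : T `<=` identity_component G.
  apply: subsemigroup_gen_sub => [_ /mapP[b s_b ->]|]; first exact: G0K.
  exact: identity_componentD.
exists T; split.
- by move=> x Tx; split; [exact: subsemigroup_gen_map_mulrn Tx|exact: TG0].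
- by exists [seq b *+ K | b <- s].
- apply: somewhere_dense_in_interior.
    exact: closure_subset_closed (@closed_identity_component G) TG0.
  exact: interior_closure_finite_translates (subsemigroup_gen_residues s_a K_gt0) intS.
Qed.
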